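(* Let $A$ be an abelian group, $a\in A$ and $\varphi$ an endomorphism of $A$. If $\varphi$ is inertial or left-inertial, then the torsion subgroup of $\mathbb{Z}[\varphi]a$ is finite.
   Context: Abelian groups are written additively. An endomorphism $\varphi$ of $A$ is inertial if $(\varphi(X)+X)/X$ is finite for every subgroup $X\le A$, and left-inertial if $X/(X\cap\varphi(X))$ is finite for every $X\le A$. $\mathbb{Z}[\varphi]a$ is the smallest $\varphi$-invariant subgroup of $A$ containing $a$. *)

From HB Require Import structures.
From mathcomp Require Import all_boot all_order all_algebra.
Set Implicit Arguments. Unset Strict Implicit. Unset Printing Implicit Defensive.
Import GRing.Theory.
Local Open Scope ring_scope.

Definition is_subgroup (A : zmodType) (X : A -> Prop) : Prop :=
  X 0 /\ (forall x y, X x -> X y -> X (x - y)).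

(* H/K is finite (for K <= H): H meets only finitely many cosets of K,
   i.e. there is a finite list of elements of H representing every coset. *)
Definition finite_index (A : zmodType) (H K : A -> Prop) : Prop :=
  exists s : seq A, (forall y, y \in s -> H y) /\
    (forall x, H x -> exists2 y, y \in s & K (x - y)).

Definition img (A : zmodType) (phi : A -> A) (X : A -> Prop) : A -> Prop :=
  fun z => exists2 x, X x & z = phi x.

Definition img_plus (A : zmodType) (phi : A -> A) (X : A -> Prop) : A -> Prop :=
  fun z => exists x y, X x /\ X y /\ z = phi x + y.

Definition inertial (A : zmodType) (phi : {additive A -> A}) : Prop :=
  forall X : A -> Prop, is_subgroup X -> finite_index (img_plus phi X) X.

Definition left_inertial (A : zmodType) (phi : {additive A -> A}) : Prop :=
  forall X : A -> Prop, is_subgroup X ->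
    finite_index X (fun z => X z /\ img phi X z).

Definition Zphi (A : zmodType) (phi : {additive A -> A}) (a : A) : A -> Prop :=
  fun z => forall H : A -> Prop, is_subgroup H -> (forall x, H x -> H (phi x)) ->
    H a -> H z.

Definition torsion_part (A : zmodType) (H : A -> Prop) : A -> Prop :=
  fun z => H z /\ exists n : nat, (0 < n)%N /\ z *+ n = 0.

Definition finite_pred (A : zmodType) (P : A -> Prop) : Prop :=
  exists s : seq A, forall z, P z -> z \in s.

(* For p in Z[X] write p x for p(phi) x, i.e. [pact phi p x].  If a has no nonzero
   annihilator, Z[phi]a is a copy of Z[X] and has no torsion.  Otherwise let f be
   a nonzero annihilator of minimal degree: every annihilator is a multiple of f
   over Q, so by Gauss's lemma the torsion of Z[phi]a lies in Z[phi]t for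
   t = zprimitive(f) a, and t is killed by e = |zcontents f|.  Applying
   (left-)inertiality to the subgroup Z[phi^2]t of even-degree values, the
   pigeonhole principle gives a relation R t = 0 with one coefficient of R equal
   to 1.  Modulo any prime p this coefficient prevents R from vanishing, which
   yields a monic relation m t in p Z[phi]t; multiplying these over the prime
   factors of e gives a monic m with m t in e Z[phi]t = 0.  Hence Z[phi]t is
   spanned by finitely many phi^i t, each of order dividing e, and is finite. *)

From HB Require Import structures.
From mathcomp Require Import all_boot all_order all_algebra.
From Stdlib Require Import Classical ClassicalEpsilon.
Set Implicit Arguments. Unset Strict Implicit. Unset Printing Implicit Defensive.
Import GRing.Theory Num.Theory.
Local Open Scope ring_scope.

Section PolyAction.
Variables (A : zmodType) (phi : {additive A -> A}).

Lemma iter_is_zmod_morphism n : zmod_morphism (iter n phi).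
Proof. by elim: n => [//|n IH] x y /=; rewrite IH raddfB. Qed.

HB.instance Definition _ n :=
  GRing.isZmodMorphism.Build A A (iter n phi) (iter_is_zmod_morphism n).

Definition pact (p : {poly int}) (x : A) : A :=
  \sum_(i < size p) iter i phi x *~ p`_i.

Lemma pact_widen (p : {poly int}) (x : A) n :
  (size p <= n)%N -> pact p x = \sum_(i < n) iter i phi x *~ p`_i.
Proof.
move=> le_p_n; rewrite /pact (big_ord_widen n (fun i => iter i phi x *~ p`_i) le_p_n).
rewrite big_mkcond /=; apply: eq_bigr => i _.
by case: ltnP => // /(nth_default 0) ->; rewrite mulr0z.
Qed.

Lemma pact_is_zmod_morphism (p : {poly int}) : zmod_morphism (pact p).
Proof.
by move=> x y; rewrite /pact -sumrB; apply: eq_bigr => i _; rewrite raddfB mulrzBl.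
Qed.

HB.instance Definition _ p :=
  GRing.isZmodMorphism.Build A A (pact p) (pact_is_zmod_morphism p).

Lemma pact0 (x : A) : pact 0 x = 0.
Proof. by rewrite /pact size_poly0 big_ord0. Qed.

Lemma pactD (p q : {poly int}) (x : A) : pact (p + q) x = pact p x + pact q x.
Proof.
pose n := maxn (size p) (size q).
rewrite (@pact_widen (p + q) x n) ?(leq_trans (size_polyD _ _)) //.
rewrite (@pact_widen p x n) ?leq_maxl // (@pact_widen q x n) ?leq_maxr //.
by rewrite -big_split; apply: eq_bigr => i _; rewrite coefD mulrzDr.
Qed.

Lemma pactZ (c : int) (p : {poly int}) (x : A) : pact (c *: p) x = pact p x *~ c.
Proof.
rewrite (@pact_widen _ x (size p)) ?size_scale_leq // /pact mulrz_suml.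
by apply: eq_bigr => i _; rewrite coefZ mulrzA mulrzAC.
Qed.

Lemma pactB (p q : {poly int}) (x : A) : pact (p - q) x = pact p x - pact q x.
Proof. by rewrite pactD -scaleN1r pactZ mulrN1z. Qed.

Lemma pactC (c : int) (x : A) : pact c%:P x = x *~ c.
Proof. by rewrite (@pact_widen _ x 1) ?size_polyC ?leq_b1 // big_ord1 coefC. Qed.

Lemma pact_phi (p : {poly int}) (x : A) : pact p (phi x) = phi (pact p x).
Proof.
by rewrite /pact raddf_sum; apply: eq_bigr => i _; rewrite raddfMz -iterSr.
Qed.

Lemma pactMX (p : {poly int}) (x : A) : pact (p * 'X) x = pact p (phi x).
Proof.
have le_pX : (size (p * 'X)%R <= (size p).+1)%N.
  by rewrite (leq_trans (size_polyMleq _ _)) // size_polyX addn2.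
rewrite (pact_widen _ le_pX) big_ord_recl coefMX /= mulr0z add0r.
by apply: eq_bigr => i _; rewrite coefMX -iterSr.
Qed.

Lemma pactM (p q : {poly int}) (x : A) : pact (p * q) x = pact p (pact q x).
Proof.
elim/poly_ind: p q x => [|p c IH] q x; first by rewrite mul0r !pact0.
rewrite mulrDl -mulrA (mulrC 'X) pactD IH mul_polyC pactZ pactMX.
by rewrite pactD pactC pactMX pact_phi.
Qed.

Lemma pactXn n (x : A) : pact 'X^n x = iter n phi x.
Proof.
elim: n x => [|n IH] x; first by rewrite expr0 -polyC1 pactC.
by rewrite exprSr pactMX IH iterSr.
Qed.

Definition pspan (t : A) : A -> Prop := fun z => exists r, z = pact r t.

Lemma Zphi_pspan (a z : A) : Zphi phi a z -> pspan a z.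
Proof.
apply; last by exists 1; rewrite -polyC1 pactC.
- split; first by exists 0; rewrite pact0.
  by move=> _ _ [p ->] [q ->]; exists (p - q); rewrite pactB.
- by move=> _ [p ->]; exists (p * 'X); rewrite pactMX pact_phi.
Qed.

End PolyAction.

Lemma ex_min_measure (T : Type) (mu : T -> nat) (P : T -> Prop) :
  (exists x, P x) -> exists x, P x /\ forall y, P y -> (mu x <= mu y)%N.
Proof.
case=> x0 Px0.
pose Q n :=
  if excluded_middle_informative (exists2 x, P x & mu x = n) then true else false.
have QP n : reflect (exists2 x, P x & mu x = n) (Q n).
  by rewrite /Q; case: excluded_middle_informative => h; constructor.
have ex_Q : exists n, Q n by exists (mu x0); apply/QP; exists x0.
have [n /QP[x Px <-] min_n] := ex_minnP ex_Q.
by exists x; split=> // y Py; apply/min_n/QP; exists y.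
Qed.

Section Torsion.
Variables (A : zmodType) (phi : {additive A -> A}) (a : A).

Lemma min_annihilator_dvdp (f h : {poly int}) : f != 0 -> pact phi f a = 0 ->
  (forall g, g != 0 /\ pact phi g a = 0 -> (size f <= size g)%N) ->
  pact phi h a = 0 -> f %| h.
Proof.
move=> f_neq0 fa0 f_min ha0; apply: contraT => h_mod_f_neq0.
have : pact phi (h %% f) a = 0.
  move/(congr1 (pact phi ^~ a)): (Pdiv.Idomain.divp_eq h f).
  by rewrite pactZ ha0 mul0rz pactD pactM fa0 raddf0 add0r => <-.
by move/(conj h_mod_f_neq0)/f_min; rewrite leqNgt ltn_modp ?f_neq0.
Qed.

Lemma torsion_Zphi_eq0 (z : A) : (forall g, pact phi g a = 0 -> g = 0) ->
  torsion_part (Zphi phi a) z -> z = 0.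
Proof.
move=> ann0 [/Zphi_pspan[p ->] [n [n_gt0 pn0]]].
have n_neq0 : n%:Z != 0 by rewrite eqz_nat -lt0n.
have /eqP : n%:Z *: p = 0 by apply: ann0; rewrite pactZ -pmulrn.
by rewrite scale_poly_eq0 (negbTE n_neq0) => /eqP ->; rewrite pact0.
Qed.

Lemma torsion_Zphi_zprimitive (f : {poly int}) (z : A) : f != 0 -> pact phi f a = 0 ->
  (forall g, g != 0 /\ pact phi g a = 0 -> (size f <= size g)%N) ->
  torsion_part (Zphi phi a) z -> pspan phi (pact phi (zprimitive f) a) z.
Proof.
move=> f_neq0 fa0 f_min [/Zphi_pspan[p ->] [n [n_gt0 pn0]]].
have n_neq0 : n%:Z != 0 by rewrite eqz_nat -lt0n.
have : f %| n%:Z *: p.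
  by apply: min_annihilator_dvdp; rewrite // pactZ -pmulrn.
rewrite dvdpZr // => /dvdpP_int[r ->].
by exists r; rewrite mulrC pactM.
Qed.

Lemma pact_zprimitive_torsion (f : {poly int}) : pact phi f a = 0 ->
  pact phi (zprimitive f) a *+ `|zcontents f|%N = 0.
Proof.
move=> fa0; set c := zcontents f.
have tc : pact phi (zprimitive f) a *~ c = 0 by rewrite -pactZ -zpolyEprim.
rewrite pmulrn abszE; have [c_ge0|c_lt0] := lerP 0 c.
  by rewrite ger0_norm.
by rewrite ltr0_norm // mulrNz tc oppr0.
Qed.

Lemma torsion_Zphi_sub_pspan : exists t e, (0 < e)%N /\ t *+ e = 0 /\
  (forall z, torsion_part (Zphi phi a) z -> pspan phi t z).
Proof.
have [ann|no_ann] := classic (exists f, f != 0 /\ pact phi f a = 0); last first.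
  exists 0, 1%N; split=> //; split=> [|z /torsion_Zphi_eq0 ->]; first exact: mulr1n.
    by exists 0; rewrite pact0.
  by move=> g ga0; apply/eqP/contraT => g_neq0; case: no_ann; exists g.
have [f [[f_neq0 fa0] f_min]] := ex_min_measure (fun f : {poly int} => size f) ann.
exists (pact phi (zprimitive f) a), `|zcontents f|%N; split.
  by rewrite absz_gt0 zcontents_eq0.
by split; [exact: pact_zprimitive_torsion | move=> z; apply: torsion_Zphi_zprimitive].
Qed.

End Torsion.

Lemma subrBB (V : zmodType) (x y z : V) : (x - z) - (y - z) = x - y.
Proof. by rewrite (addrC y) addrKA. Qed.

Lemma pigeonhole_nat (T : eqType) (s : seq T) (P : nat -> T -> Prop) :
  (forall k, exists2 y, y \in s & P k y) ->
  exists k1 k2 y, [/\ (k1 < k2)%N, P k1 y & P k2 y].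
Proof.
move=> cover.
have {}cover k : exists y, y \in s /\ P k y by have [y] := cover k; exists y.
pose f k := proj1_sig (constructive_indefinite_description _ (cover k)).
have f_spec k : f k \in s /\ P k (f k) :=
  proj2_sig (constructive_indefinite_description _ (cover k)).
pose l := [seq f k | k <- iota 0 (size s).+1].
have /(uniqPn (f 0%N))[i [j [lt_ij lt_j e]]] : ~~ uniq l.
  apply/negP => /(@uniq_leq_size _ _ s) le_ls.
  have : (size l <= size s)%N by apply: le_ls => _ /mapP[k _ ->]; exact: (f_spec k).1.
  by rewrite size_map size_iota ltnn.
rewrite size_map size_iota in lt_j.
rewrite !(nth_map 0%N) ?size_iota ?(ltn_trans lt_ij) // in e.
rewrite !nth_iota ?(ltn_trans lt_ij) // in e.
by exists i, j, (f i); split=> //; [exact: (f_spec i).2 | rewrite e; exact: (f_spec j).2].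
Qed.

Section InertialRelation.
Variables (A : zmodType) (phi : {additive A -> A}) (t : A).

Definition even_pspan : A -> Prop :=
  fun z => exists2 q : {poly int}, (forall j, odd j -> q`_j = 0) & z = pact phi q t.

Lemma even_pspan_subgroup : is_subgroup even_pspan.
Proof.
split; first by exists 0 => [j _|]; rewrite ?coef0 ?pact0.
move=> _ _ [q1 q1_even ->] [q2 q2_even ->]; exists (q1 - q2); last by rewrite pactB.
by move=> j j_odd; rewrite coefB q1_even ?q2_even ?subrr.
Qed.

Lemma even_pspan_Xn k : even_pspan (pact phi 'X^(k.*2) t).
Proof.
by exists 'X^(k.*2) => // j; rewrite coefXn; case: eqP => // ->; rewrite odd_double.
Qed.

Lemma inertial_relation : inertial phi ->
  exists R, pact phi R t = 0 /\ exists i, R`_i = 1.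
Proof.
move=> /(_ _ even_pspan_subgroup)[s [_ cover]].
have cover_k k : exists2 y, y \in s & even_pspan (phi (pact phi 'X^(k.*2) t) - y).
  apply: (cover); exists (pact phi 'X^(k.*2) t), 0; rewrite addr0.
  by do !split; [exact: even_pspan_Xn | case: even_pspan_subgroup].
have [k1 [k2 [y [lt12 [q1 q1_even e1] [q2 q2_even e2]]]]] := pigeonhole_nat cover_k.
exists ('X^(k2.*2.+1) - 'X^(k1.*2.+1) - (q2 - q1)); split.
  by rewrite !pactB -e1 -e2 subrBB !exprSr !pactMX !pact_phi subrr.
exists k2.*2.+1; rewrite !coefB !coefXn eqxx q1_even ?q2_even /= ?odd_double //.
by rewrite gtn_eqF ?subrr ?subr0 // ltnS ltn_double.
Qed.

Lemma left_inertial_relation : left_inertial phi ->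
  exists R, pact phi R t = 0 /\ exists i, R`_i = 1.
Proof.
move=> /(_ _ even_pspan_subgroup)[s [_ cover]].
have cover_k k : exists2 y, y \in s & img phi even_pspan (pact phi 'X^(k.*2) t - y).
  by have [y y_s [_ img_y]] := cover _ (even_pspan_Xn k); exists y.
have [k1 [k2 [y [lt12 [_ [q1 q1_even ->] e1] [_ [q2 q2_even ->] e2]]]]] :=
  pigeonhole_nat cover_k.
case: k2 lt12 e2 q2_even => // k2 lt12 e2 q2_even.
exists ('X^(k2.+1.*2) - 'X^(k1.*2) - (q2 - q1) * 'X); split.
  by rewrite !pactB pactMX pact_phi pactB raddfB -e1 -e2 subrBB subrr.
exists k2.+1.*2; rewrite !coefB !coefXn coefMX coefB doubleS eqxx /=.
rewrite q1_even ?q2_even /= ?odd_double //.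
by rewrite gtn_eqF ?subrr ?subr0 // -doubleS ltn_double.
Qed.

End InertialRelation.

Lemma take_poly_lead (R : nzRingType) (p : {poly R}) :
  p = take_poly (size p).-1 p + lead_coef p *: 'X^((size p).-1).
Proof.
rewrite -{1}(poly_take_drop (size p).-1 p) -mul_polyC; congr (_ + _ * _).
rewrite [LHS]size1_polyC ?coef_drop_poly ?lead_coefE //.
by rewrite size_drop_poly leq_subLR addn1 leqSpred.
Qed.

Section MonicRelation.
Variables (A : zmodType) (phi : {additive A -> A}) (t : A).

Lemma monic_relation_coprime_lead (p : nat) (R q : {poly int}) :
  coprimez p (lead_coef R) -> pact phi R t = pact phi q t *+ p ->
  exists m q', m \is monic /\ pact phi m t = pact phi q' t *+ p.
Proof.
move=> /coprimezP[[u v] /= Bezout] Rq; set k := (size R).-1.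
exists (v *: R + (u * p) *: 'X^k), (v *: q + u *: 'X^k); split.
  have -> : v *: R + (u * p) *: 'X^k = 'X^k + v *: take_poly k R.
    rewrite {1}[R]take_poly_lead scalerDr scalerA -addrA -scalerDl addrC.
    by rewrite [_ + u * p]addrC Bezout scale1r.
  rewrite monicE lead_coefDl ?lead_coefXn // size_polyXn ltnS.
  exact: leq_trans (size_scale_leq _ _) (size_take_poly _ _).
rewrite !pactD !pactZ Rq mulrnDl !pmulrn mulrzA.
by congr (_ + _); exact: mulrzAC.
Qed.

Lemma monic_relation_prime (p : nat) (R q : {poly int}) : prime p ->
  (exists i, R`_i = 1) -> pact phi R t = pact phi q t *+ p ->
  exists m q', m \is monic /\ pact phi m t = pact phi q' t *+ p.
Proof.
(* Peel off leading terms divisible by p; the coefficient 1 is never peeled. *)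
move=> p_prime; have [n] := ubnP (size R).
elim: n R q => // n IH R q lt_Rn [i Ri1] Rq.
have [/dvdzP[c lead_c] | p_ndvd] := boolP (p%:Z %| lead_coef R)%Z; last first.
  by apply: monic_relation_coprime_lead Rq; rewrite coprimezE /= prime_coprime.
set k := (size R).-1.
have lt_i_size : (i < size R)%N.
  by rewrite ltnNge; apply/negP => /leq_sizeP/(_ i (leqnn i)); rewrite Ri1 => /eqP.
have lt_ik : (i < k)%N.
  rewrite ltn_neqAle -ltnS prednK ?lt_i_size ?andbT ?(leq_ltn_trans _ lt_i_size) //.
  apply: contraTneq isT => eik; have : (p%:Z %| 1)%Z.
    by apply/dvdzP; exists c; rewrite -lead_c lead_coefE -/k -eik Ri1.
  by rewrite dvdzE /= dvdn1 => /eqP p1; move: (prime_gt1 p_prime); rewrite p1.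
apply: (IH (take_poly k R) (q - c *: 'X^k)).
- rewrite (leq_ltn_trans (size_take_poly _ _)) // -ltnS prednK //.
  exact: leq_ltn_trans _ lt_i_size.
- by exists i; rewrite coef_take_poly lt_ik.
- have <- : R - lead_coef R *: 'X^k = take_poly k R by rewrite {1}[R]take_poly_lead addrK.
  by rewrite !pactB Rq !pactZ lead_c mulrnBl !pmulrn mulrzA.
Qed.

End MonicRelation.

Section MonicAnnihilator.
Variables (A : zmodType) (phi : {additive A -> A}) (t : A).

Lemma monic_relation_mod (R : {poly int}) (d : nat) :
  pact phi R t = 0 -> (exists i, R`_i = 1) -> (0 < d)%N ->
  exists m q, m \is monic /\ pact phi m t = pact phi q t *+ d.
Proof.
move=> Rt0 R1; elim/ltn_ind: d => d IH d_gt0.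
have [d_le1|d_gt1] := leqP d 1.
  exists 1, 1; split; first exact: monic1.
  by rewrite (_ : d = 1%N) ?mulr1n //; apply/anti_leq; rewrite d_le1.
pose p := pdiv d; have p_prime : prime p := pdiv_prime d_gt1.
have dp_gt0 : (0 < d %/ p)%N by rewrite divn_gt0 ?prime_gt0 // dvdn_leq // pdiv_dvd.
have [m1 [q1 [m1_monic m1q1]]] := IH _ (ltn_Pdiv (prime_gt1 p_prime) d_gt0) dp_gt0.
have Rq : pact phi R t = pact phi 0 t *+ p by rewrite Rt0 pact0 mul0rn.
have [m2 [q2 [m2_monic m2q2]]] := monic_relation_prime p_prime R1 Rq.
exists (m1 * m2), (q2 * q1); split; first by rewrite monicMl.
rewrite pactM m2q2 raddfMn /= -pactM (mulrC m1) (pactM phi q2 m1) m1q1.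
by rewrite raddfMn /= -pactM -mulrnA divnK ?pdiv_dvd.
Qed.

Lemma finite_pspan (e : nat) (m : {poly int}) : (0 < e)%N -> t *+ e = 0 ->
  m \is monic -> pact phi m t = 0 -> finite_pred (pspan phi t).
Proof.
move=> e_gt0 te0 m_monic mt0; set N := size m.
exists [seq \sum_(i < N) iter i phi t *+ F i
          | F : {ffun 'I_N -> 'I_e} <- enum {ffun 'I_N -> 'I_e}].
move=> _ [r ->].
have -> : pact phi r t = pact phi (r %% m) t.
  by rewrite {1}(Pdiv.IdomainMonic.divp_eq m_monic r) pactD pactM mt0 raddf0 add0r.
have le_mod : (size (r %% m)%R <= N)%N by rewrite ltnW // ltn_modp monic_neq0.
rewrite (pact_widen _ _ le_mod); set r' := r %% m.
have e_neq0 : e%:Z != 0 by rewrite eqz_nat -lt0n.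
have lt_mod i : (`|(r'`_i %% e%:Z)%Z|%N < e)%N.
  by rewrite -ltz_nat gez0_abs ?modz_ge0 // ltz_pmod // ltz_nat.
apply/mapP; exists [ffun i : 'I_N => Ordinal (lt_mod i)]; first by rewrite mem_enum.
apply: eq_bigr => i _; rewrite ffunE /=.
have ti : iter i phi t *~ e = 0 by rewrite -raddfMz -pmulrn te0 raddf0.
rewrite {1}(divz_eq r'`_i e) mulrzDr mulrzA mulrzAC ti mul0rz add0r.
by rewrite pmulrn gez0_abs ?modz_ge0.
Qed.

End MonicAnnihilator.

Theorem lemma4p3 (A : zmodType) (a : A) (phi : {additive A -> A}) :
  inertial phi \/ left_inertial phi -> finite_pred (torsion_part (Zphi phi a)).
Proof.
move=> inert.
have [t [e [e_gt0 [te0 torsion_sub]]]] := torsion_Zphi_sub_pspan phi a.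
have [R [Rt0 R1]] : exists R, pact phi R t = 0 /\ exists i, R`_i = 1.
  by case: inert => inert; [exact: inertial_relation | exact: left_inertial_relation].
have [m [q [m_monic mq]]] := monic_relation_mod Rt0 R1 e_gt0.
have mt0 : pact phi m t = 0 by rewrite mq -raddfMn te0 raddf0.
have [s s_cover] := finite_pspan e_gt0 te0 m_monic mt0.
by exists s => z /torsion_sub/s_cover.
Qed.
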